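(* Let $G$ be a simple graph on $n$ vertices with $cM_2(G)\ge cM_2(H)$ for every simple graph $H$ on $n$ vertices, and let $F$, $X$ be as defined in the context. If $u,v\in X$ are distinct and $uv\notin E(G)$, then $d_G(u)=d_G(v)$, and $d_G(w)\ne d_G(u)$ for every $w\in X\setminus\{u,v\}$.
   Context: All graphs are finite and simple; $d_G(u)$ is the degree of $u$ and $cM_2(G)=\sum_{uv\in E(G)}|d_G(u)^2-d_G(v)^2|$. The canonical mixed graph $F$ of $G$ has vertex set $V(G)$; for each edge $uv\in E(G)$: if $d_G(u)>d_G(v)$ then $F$ contains the arc $\overrightarrow{uv}$, and if $d_G(u)=d_G(v)$ then $F$ contains the undirected edge $uv$. $d^+_F(u)$ (resp. $d^-_F(u)$) is the number of arcs of $F$ with tail (resp. head) $u$. $X=\{u\in V(G): d^+_F(u)\ge d^-_F(u)\}$ and $Y=\{u\in V(G): d^+_F(u)< d^-_F(u)\}$. *)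

From mathcomp Require Import all_boot.
Set Implicit Arguments. Unset Strict Implicit. Unset Printing Implicit Defensive.

Definition simple_graph n (e : rel 'I_n) : Prop := symmetric e /\ irreflexive e.

Definition deg n (e : rel 'I_n) (u : 'I_n) : nat := #|[set v | e u v]|.

Definition absdiff (a b : nat) : nat := (a - b) + (b - a).

Definition cM2 n (e : rel 'I_n) : nat :=
  \sum_(u : 'I_n) \sum_(v : 'I_n | (u < v) && e u v)
     absdiff (deg e u ^ 2) (deg e v ^ 2).

(* Canonical mixed graph F: arc u->v iff uv edge and d(u) > d(v). *)
Definition outdegF n (e : rel 'I_n) (u : 'I_n) : nat :=
  #|[set v | e u v && (deg e v < deg e u)]|.
Definition indegF n (e : rel 'I_n) (u : 'I_n) : nat :=
  #|[set v | e u v && (deg e u < deg e v)]|.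

Definition inX n (e : rel 'I_n) (u : 'I_n) : bool := indegF e u <= outdegF e u.

From mathcomp Require Import all_boot zify.
Set Implicit Arguments. Unset Strict Implicit. Unset Printing Implicit Defensive.

(* Adding a missing edge uv to G changes cM2 by
     |(d_u+1)^2 - (d_v+1)^2| + (2d_u+1)(d^+(u) + d^=(u) - d^-(u)) + (same for v),
   where d^=(z) counts the undirected edges of F at z: a neighbour y of u with
   d_y <= d_u contributes 2d_u+1 more, one with d_y > d_u contributes 2d_u+1 less.
   For u, v in X every term is nonnegative, so maximality forces all of them to
   vanish: d_u = d_v, no undirected F-edge meets u or v, and G+uv is again extremal.
   A vertex w of X with d_w = d_u is then adjacent to neither u nor v; u and w lie
   in X for G+uv and are nonadjacent there, so the first part applied to G+uv gives
   d_u+1 = d_w = d_u. *)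

Lemma absdiffC a b : absdiff a b = absdiff b a.
Proof. by rewrite /absdiff addnC. Qed.

Lemma absdiff_eq0 a b : absdiff a b = 0 -> a = b.
Proof. rewrite /absdiff; lia. Qed.

Definition sqr_gain a d := if d <= a then (2 * a).+1 else 0.
Definition sqr_loss a d := if a < d then (2 * a).+1 else 0.

Lemma absdiff_sqrS a d :
  absdiff (a.+1 ^ 2) (d ^ 2) + sqr_loss a d = absdiff (a ^ 2) (d ^ 2) + sqr_gain a d.
Proof.
have sqrS : a.+1 ^ 2 = a ^ 2 + (2 * a).+1 by rewrite -addn1 sqrnD; lia.
rewrite /sqr_gain /sqr_loss /absdiff sqrS; case: leqP => [da|ad].
  by have := leq_exp2r d a (isT : 0 < 2); lia.
by have := leq_exp2r a.+1 d (isT : 0 < 2); rewrite sqrS; lia.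
Qed.

Lemma sum_if_eq (T : finType) (z : T) (F : T -> nat) :
  \sum_(y : T) (if y == z then F y else 0) = F z.
Proof. by rewrite -big_mkcond big_pred1_eq. Qed.

Lemma sum_row (T : finType) (z : T) (F : T -> nat) :
  \sum_(x : T) \sum_(y : T) (if x == z then F y else 0) = \sum_(y : T) F y.
Proof.
rewrite -[RHS](sum_if_eq z (fun=> _)); apply: eq_bigr => x _.
by case: (x == z); last rewrite big1.
Qed.

Lemma sum_col (T : finType) (z : T) (F : T -> nat) :
  \sum_(x : T) \sum_(y : T) (if y == z then F x else 0) = \sum_(x : T) F x.
Proof. by rewrite exchange_big sum_row. Qed.

Lemma sum_if_card (T : finType) (P : pred T) k :
  \sum_(y : T) (if P y then k else 0) = #|[set y | P y]| * k.
Proof. by rewrite -big_mkcond sum_nat_const cardsE. Qed.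

Lemma big_split2 (T : finType) (F G : T -> T -> nat) :
  \sum_(x : T) \sum_(y : T) (F x y + G x y)
  = \sum_(x : T) \sum_(y : T) F x y + \sum_(x : T) \sum_(y : T) G x y.
Proof. by rewrite -big_split; apply: eq_bigr => x _; rewrite big_split. Qed.

Section Costs.
Variables (n : nat) (e : rel 'I_n).
Hypotheses (e_sym : symmetric e) (e_irr : irreflexive e).
Implicit Types x y z : 'I_n.

Definition edge_cost x y : nat := if e x y then absdiff (deg e x ^ 2) (deg e y ^ 2) else 0.

Lemma edge_costC x y : edge_cost x y = edge_cost y x.
Proof. by rewrite /edge_cost e_sym absdiffC. Qed.

Lemma cM2_double : cM2 e + cM2 e = \sum_(x : 'I_n) \sum_(y : 'I_n) edge_cost x y.
Proof.
have cM2_lt : cM2 e = \sum_(x : 'I_n) \sum_(y : 'I_n) (x < y) * edge_cost x y.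
  apply: eq_bigr => x _; rewrite big_mkcondr /= big_mkcond /=.
  by apply: eq_bigr => y _; rewrite /edge_cost; case: (x < y); case: (e x y); rewrite ?mul1n ?mul0n.
have split_lt_gt (x y : 'I_n) : edge_cost x y = (x < y) * edge_cost x y + (y < x) * edge_cost x y.
  have [||/val_inj->] := ltngtP x y; rewrite ?mul1n ?mul0n ?addn0 //.
  by rewrite /edge_cost e_irr.
have -> : \sum_(x : 'I_n) \sum_(y : 'I_n) edge_cost x y =
    \sum_(x : 'I_n) (\sum_(y : 'I_n) (x < y) * edge_cost x y + \sum_(y : 'I_n) (y < x) * edge_cost x y).
  by apply: eq_bigr => x _; rewrite -big_split; apply: eq_bigr => y _; apply: split_lt_gt.
rewrite big_split /= -cM2_lt {2}cM2_lt exchange_big /=.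
by congr (_ + _); apply: eq_bigr => x _; apply: eq_bigr => y _; rewrite edge_costC.
Qed.

Definition undegF z := #|[set y | e z y && (deg e y == deg e z)]|.

Lemma incident_gainE z :
  \sum_(y : 'I_n) (if e z y then sqr_gain (deg e z) (deg e y) else 0)
  = (2 * deg e z).+1 * (outdegF e z + undegF z).
Proof.
rewrite mulnDr !(mulnC (2 * deg e z).+1) -!sum_if_card -big_split /=.
apply: eq_bigr => y _; rewrite /sqr_gain.
by case: (e z y) => //=; case: ltngtP; rewrite ?addn0.
Qed.

Lemma incident_lossE z :
  \sum_(y : 'I_n) (if e z y then sqr_loss (deg e z) (deg e y) else 0)
  = (2 * deg e z).+1 * indegF e z.
Proof.
rewrite mulnC -sum_if_card; apply: eq_bigr => y _.
by rewrite /sqr_loss; case: (e z y).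
Qed.

Lemma undegF_eq0 z w : undegF z = 0 -> e z w -> deg e w != deg e z.
Proof.
by move=> /eqP; rewrite cards_eq0 => /eqP un0 ezw; apply/eqP=> dw;
  have := in_set0 w; rewrite -un0 inE ezw dw eqxx.
Qed.

End Costs.

Definition add_edge n (e : rel 'I_n) (u v : 'I_n) : rel 'I_n :=
  fun x y => e x y || (x == u) && (y == v) || (x == v) && (y == u).
Arguments add_edge : simpl never.

Lemma add_edge_simple n (e : rel 'I_n) u v :
  simple_graph e -> u != v -> simple_graph (add_edge e u v).
Proof.
move=> [e_sym e_irr] neq_uv; split=> [x y|x]; rewrite /add_edge.
  by rewrite e_sym orbAC [(y == u) && _]andbC [(y == v) && _]andbC.
rewrite e_irr /=; apply/negP=> /orP[] /andP[/eqP-> /eqP eq_uv];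
  by rewrite eq_uv eqxx in neq_uv.
Qed.

Section AddEdge.
Variables (n : nat) (e : rel 'I_n) (u v : 'I_n).
Hypotheses (e_sym : symmetric e) (e_irr : irreflexive e).
Hypotheses (neq_uv : u != v) (nuv : ~~ e u v).
Implicit Types x y z : 'I_n.
Local Notation e' := (add_edge e u v).

Let neq_vu : v != u. Proof. by rewrite eq_sym. Qed.
Let nvu : ~~ e v u. Proof. by rewrite e_sym. Qed.

Lemma deg_add_edge x : deg e' x = deg e x + (x == u) + (x == v).
Proof.
rewrite /deg; have [->|xu] := eqVneq x u.
  have -> : [set y | e' u y] = v |: [set y | e u y].
    by apply/setP=> y; rewrite !inE /add_edge eqxx (negbTE neq_uv) /= orbF orbC.
  by rewrite cardsU1 inE nuv (negbTE neq_uv) add1n addn0 addn1.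
have [->|xv] := eqVneq x v.
  have -> : [set y | e' v y] = u |: [set y | e v y].
    by apply/setP=> y; rewrite !inE /add_edge eqxx (negbTE neq_vu) /= orbF orbC.
  by rewrite cardsU1 inE nvu add1n addn0 addn1.
rewrite !addn0; apply: eq_card => y.
by rewrite !inE /add_edge (negbTE xu) (negbTE xv) /= !orbF.
Qed.

Lemma deg_add_edge_l : deg e' u = (deg e u).+1.
Proof. by rewrite deg_add_edge eqxx (negbTE neq_uv) addn0 addn1. Qed.

Lemma deg_add_edge_r : deg e' v = (deg e v).+1.
Proof. by rewrite deg_add_edge eqxx (negbTE neq_vu) addn0 addn1. Qed.

Lemma deg_add_edge_other x : x != u -> x != v -> deg e' x = deg e x.
Proof. by move=> /negbTE xu /negbTE xv; rewrite deg_add_edge xu xv !addn0. Qed.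

Let c := absdiff ((deg e u).+1 ^ 2) ((deg e v).+1 ^ 2).

Let pair_cost z z' x y := if x == z then (if y == z' then c else 0) else 0.

Let incid z (f : nat -> nat -> nat) x y :=
  if x == z then (if e z y then f (deg e z) (deg e y) else 0) else 0.

(* The positive and negative parts of the change of [edge_cost] at (x, y) when uv
   is added, kept apart so that the identity below stays in nat. *)
Let gain x y := pair_cost u v x y + pair_cost v u x y
  + incid u sqr_gain x y + incid u sqr_gain y x
  + incid v sqr_gain x y + incid v sqr_gain y x.

Let loss x y := incid u sqr_loss x y + incid u sqr_loss y x
  + incid v sqr_loss x y + incid v sqr_loss y x.

Lemma edge_cost_add_edge x y :
  edge_cost e' x y + loss x y = edge_cost e x y + gain x y.
Proof.
have e'E : e' x y = e x y || (x == u) && (y == v) || (x == v) && (y == u) by [].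
rewrite /edge_cost /gain /loss /pair_cost /incid e'E.
have [->|xu] := eqVneq x u.
  have [->|yu] := eqVneq y u; first by rewrite e_irr (negbTE neq_uv).
  rewrite (negbTE neq_uv) (negbTE nvu) /= !orbF.
  have [->|yv] := eqVneq y v.
    by rewrite (negbTE nuv) deg_add_edge_l deg_add_edge_r /= !addn0.
  rewrite /= orbF deg_add_edge_l deg_add_edge_other //.
  by case: (e u y); rewrite ?addn0 ?absdiff_sqrS.
rewrite /= orbF.
have [->|xv] := eqVneq x v.
  have [->|yv] := eqVneq y v; first by rewrite e_irr (negbTE neq_vu).
  rewrite (negbTE nuv) /=.
  have [->|yu] := eqVneq y u.
    by rewrite (negbTE nvu) deg_add_edge_l deg_add_edge_r absdiffC /= !addn0 !add0n.
  rewrite orbF deg_add_edge_r deg_add_edge_other //.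
  by case: (e v y); rewrite ?addn0 ?add0n ?absdiff_sqrS.
rewrite /= orbF deg_add_edge_other //.
have [->|yu] := eqVneq y u.
  rewrite (negbTE neq_uv) e_sym deg_add_edge_l !(absdiffC (deg e x ^ 2)).
  by case: (e u x); rewrite ?addn0 ?add0n ?absdiff_sqrS.
have [->|yv] := eqVneq y v.
  rewrite e_sym deg_add_edge_r !(absdiffC (deg e x ^ 2)).
  by case: (e v x); rewrite ?addn0 ?add0n ?absdiff_sqrS.
by rewrite deg_add_edge_other.
Qed.

Let incident_sum z f := \sum_(y : 'I_n) (if e z y then f (deg e z) (deg e y) else 0).

Lemma cM2_add_edge :
  cM2 e' + (2 * deg e u).+1 * indegF e u + (2 * deg e v).+1 * indegF e v
  = cM2 e + c + (2 * deg e u).+1 * (outdegF e u + undegF e u)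
              + (2 * deg e v).+1 * (outdegF e v + undegF e v).
Proof.
have [e'_sym e'_irr] := add_edge_simple (conj e_sym e_irr) neq_uv.
have sum_loss : \sum_x \sum_y loss x y = incident_sum u sqr_loss + incident_sum u sqr_loss
                     + incident_sum v sqr_loss + incident_sum v sqr_loss.
  by rewrite /loss !big_split2 /incid !sum_row !sum_col.
have sum_gain : \sum_x \sum_y gain x y = c + c + incident_sum u sqr_gain + incident_sum u sqr_gain
                     + incident_sum v sqr_gain + incident_sum v sqr_gain.
  by rewrite /gain !big_split2 /pair_cost /incid !sum_row !sum_col !sum_if_eq.
have double : cM2 e' + cM2 e' + \sum_x \sum_y loss x y = cM2 e + cM2 e + \sum_x \sum_y gain x y.
  rewrite !cM2_double // -!big_split2.
  by apply: eq_bigr => x _; apply: eq_bigr => y _; apply: edge_cost_add_edge.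
move: double; rewrite sum_loss sum_gain /incident_sum.
by rewrite !incident_gainE !incident_lossE; lia.
Qed.

Lemma add_edge_l y : e' u y = e u y || (y == v).
Proof. by rewrite /add_edge eqxx (negbTE neq_uv) /= orbF. Qed.

Lemma deg_add_edge_nbr z y : ~~ e z u -> ~~ e z v -> e z y -> deg e' y = deg e y.
Proof.
move=> nzu nzv ezy; apply: deg_add_edge_other; apply: contraTneq ezy => ->.
  exact: nzu.
exact: nzv.
Qed.

(* Since d_u = d_v, the new neighbour v of u has the same degree as u in G+uv. *)
Lemma inX_add_edge_l : deg e u = deg e v -> inX e u -> inX e' u.
Proof.
rewrite /inX => duv Xu; apply: leq_trans (leq_trans Xu _).
  apply: subset_leq_card; apply/subsetP => y; rewrite !inE add_edge_l deg_add_edge_l.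
  case: eqP => [->|_]; first by rewrite deg_add_edge_r duv ltnn andbF.
  by rewrite orbF => /andP[euy]; rewrite (deg_add_edge_nbr (negbT (e_irr u)) nuv euy) euy => /ltnW.
apply: subset_leq_card; apply/subsetP => y; rewrite !inE add_edge_l deg_add_edge_l.
by case/andP=> euy; rewrite (deg_add_edge_nbr (negbT (e_irr u)) nuv euy) euy ltnS => /ltnW.
Qed.

Lemma inX_add_edge_other w : w != u -> w != v -> ~~ e w u -> ~~ e w v ->
  inX e w -> inX e' w.
Proof.
move=> wu wv nwu nwv.
have e'_w y : e' w y = e w y by rewrite /add_edge (negbTE wu) (negbTE wv) /= !orbF.
have deg_w : deg e' w = deg e w by apply: deg_add_edge_other.
have out_w : outdegF e' w = outdegF e w.
  apply: eq_card => y; rewrite !inE e'_w deg_w.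
  by case: (boolP (e w y)) => // /(deg_add_edge_nbr nwu nwv)->.
have in_w : indegF e' w = indegF e w.
  apply: eq_card => y; rewrite !inE e'_w deg_w.
  by case: (boolP (e w y)) => // /(deg_add_edge_nbr nwu nwv)->.
by rewrite /inX out_w in_w.
Qed.

Hypothesis e_max : forall h : rel 'I_n, simple_graph h -> cM2 h <= cM2 e.

Lemma max_add_edge_inX : inX e u -> inX e v ->
  [/\ deg e u = deg e v, undegF e u = 0, undegF e v = 0 & cM2 e' = cM2 e].
Proof.
rewrite /inX => Xu Xv.
have le_cM2 := e_max (add_edge_simple (conj e_sym e_irr) neq_uv).
have cM2_e' := cM2_add_edge.
have in_out_u : (2 * deg e u).+1 * indegF e u <= (2 * deg e u).+1 * outdegF e u.
  by rewrite leq_mul2l Xu orbT.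
have in_out_v : (2 * deg e v).+1 * indegF e v <= (2 * deg e v).+1 * outdegF e v.
  by rewrite leq_mul2l Xv orbT.
have c0 : c = 0 by lia.
have un_u : (2 * deg e u).+1 * undegF e u == 0 by apply/eqP; lia.
have un_v : (2 * deg e v).+1 * undegF e v == 0 by apply/eqP; lia.
move: un_u un_v; rewrite !muln_eq0 /= => /eqP un_u /eqP un_v.
split=> //; last by lia.
by apply/eqP; rewrite -eqSS -(eqn_exp2r _ _ (isT : 0 < 2)); apply/eqP/absdiff_eq0.
Qed.

End AddEdge.

Theorem claim1 (n : nat) (e : rel 'I_n) :
  simple_graph e ->
  (forall h : rel 'I_n, simple_graph h -> cM2 h <= cM2 e) ->
  forall u v : 'I_n, u != v -> inX e u -> inX e v -> ~~ e u v ->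
  deg e u = deg e v /\
  (forall w : 'I_n, inX e w -> w != u -> w != v -> deg e w != deg e u).
Proof.
move=> e_simple e_max u v neq_uv Xu Xv nuv; have [e_sym e_irr] := e_simple.
have [duv unu unv cM2_eq] := max_add_edge_inX e_sym e_irr neq_uv nuv e_max Xu Xv.
split=> // w Xw wu wv; apply/negP=> /eqP dwu.
have nuw : ~~ e u w by apply/negP=> /(undegF_eq0 unu); rewrite dwu eqxx.
have nvw : ~~ e v w by apply/negP=> /(undegF_eq0 unv); rewrite dwu duv eqxx.
have [e'_sym e'_irr] := add_edge_simple e_simple neq_uv.
have e'_max (h : rel 'I_n) : simple_graph h -> cM2 h <= cM2 (add_edge e u v).
  by rewrite cM2_eq; exact: e_max.
have Xu' : inX (add_edge e u v) u by apply: inX_add_edge_l.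
have Xw' : inX (add_edge e u v) w.
  by apply: inX_add_edge_other; rewrite // e_sym.
have neq_uw : u != w by rewrite eq_sym.
have nuw' : ~~ add_edge e u v u w by rewrite add_edge_l // (negbTE nuw) wv.
have [deg_uw _ _ _] := max_add_edge_inX e'_sym e'_irr neq_uw nuw' e'_max Xu' Xw'.
by move: deg_uw; rewrite deg_add_edge_l // deg_add_edge_other // dwu; lia.
Qed.
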